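(* Let $p$ be an odd prime and $M$ the sub-add move matrix. (a) If $p\equiv3\pmod8$ or $p\equiv7\pmod8$, then $\Gamma_{M,\,p}$ has no secondary cycles. (b) If $p\equiv5\pmod8$, then $\Gamma_{M,\,p}$ has secondary cycles.
   Context: The sub-add move matrix is $M=\begin{pmatrix}1&-1\\1&1\end{pmatrix}$. $\Gamma_{M,\,p}$ is the directed graph with vertex set $\mathbb Z_p^2$ and arcs $((a,b),(a-b,a+b))$ (mod $p$; loops allowed). Let $k$ be the $\mathbb Z_p$-order of $M$ (least positive integer with $M^k\equiv I\pmod p$; it equals $4t$ with $t$ the multiplicative order of $-4$ in $GF(p)$). A directed cycle is a cycle in the underlying undirected graph such that in the induced directed subgraph every vertex has in- and out-degree $1$; a loop is a directed $1$-cycle. A primary cycle is a directed cycle of length $k$; a secondary cycle is a directed cycle that is neither primary nor a $1$-cycle. *)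

From mathcomp Require Import all_boot all_order all_algebra.
Unset Printing Implicit Defensive.
Import GRing.Theory.
Local Open Scope ring_scope.

Definition subadd (p : nat) : 'M['F_p]_2 :=
  \matrix_(i < 2, j < 2)
     (if i == ord0 then (if j == ord0 then 1 else -1) else 1).

(* Vertices of Gamma_{M,p}: Z_p^2, as column vectors (a;b).
   The unique arc out of v is v -> M v, i.e. (a,b) -> (a-b, a+b). *)
Definition step (p : nat) (v : 'cV['F_p]_2) : 'cV['F_p]_2 := subadd p *m v.

Definition is_Zp_order (p k : nat) : Prop :=
  (0 < k)%N /\ (subadd p) ^+ k = 1 /\
  forall j : nat, (0 < j)%N -> (j < k)%N -> (subadd p) ^+ j <> 1.

(* Its length is size c; loops are directed 1-cycles. *)
Definition directed_cycle (p : nat) (c : seq 'cV['F_p]_2) : Prop :=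
  c <> [::] /\ uniq c /\ fcycle (step p) c.

Definition primary_cycle (p k : nat) (c : seq 'cV['F_p]_2) : Prop :=
  directed_cycle p c /\ size c = k.

Definition secondary_cycle (p k : nat) (c : seq 'cV['F_p]_2) : Prop :=
  directed_cycle p c /\ ~ primary_cycle p k c /\ size c <> 1%N.

From mathcomp Require Import all_boot all_order all_algebra cyclic finfield.
From mathcomp Require Import zify ring.

(* M = 1 + J with J^2 = -1, so the powers of M are matrices a + b J, i.e. they
   live in a copy of Z_p[i].  If p = 3 (mod 4), -1 is not a square and Z_p[i]
   is a field: a power a + b J of M fixing a nonzero vector has
   (a - 1)^2 + b^2 = 0, hence is the identity, so every cycle through a nonzero
   vertex has length exactly k.  If p = 5 (mod 8), M has the eigenvalues 1 - y
   and 1 + y in Z_p, where y^2 = -1; their ratio squared is -1 and (p-1)/4 is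
   odd, so one eigenvalue is a square and the other is not.  An eigenvector of
   the square one has period dividing (p-1)/2, whereas a period equal to k
   would force the non-square eigenvalue to have order dividing (p-1)/2. *)

Import GRing.Theory.
Local Open Scope ring_scope.

Section Periods.
Variables (T : finType) (f : T -> T).

Lemma iter_lt_order_neq x j : (0 < j < order f x)%N -> iter j f x != x.
Proof.
case/andP=> j_gt0 lt_j; by rewrite eq_sym -(findex_eq0 f) findex_iter // -lt0n.
Qed.

Lemma order_le_period x n : (0 < n)%N -> iter n f x = x -> (order f x <= n)%N.
Proof.
move=> n_gt0 fix_x; rewrite leqNgt; apply/negP=> lt_n.
by have := iter_lt_order_neq x n; rewrite n_gt0 lt_n fix_x eqxx => /(_ isT).
Qed.

Hypothesis injf : injective f.

Lemma order_dvdn_period x n : iter n f x = x -> (order f x %| n)%N.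
Proof.
have iter_mul q : iter (q * order f x) f x = x.
  by rewrite iterM; apply: iter_fix; apply: iter_order.
move=> fix_x; rewrite /dvdn; apply/negPn/negP=> r_neq0.
have: iter (n %% order f x) f x = iter n f x.
  by rewrite {2}(divn_eq n (order f x)) addnC iterD iter_mul.
rewrite fix_x; apply/eqP/iter_lt_order_neq.
by rewrite lt0n r_neq0 ltn_pmod // order_gt0.
Qed.

End Periods.

Section ComplexMatrix.
Variable R : comRingType.

(* The matrix [[a, -b], [b, a]] of multiplication by a + b i on R[i]. *)
Definition cmx (a b : R) : 'M[R]_2 :=
  \matrix_(i, j) if i == j then a else if i == ord0 then - b else b.

Lemma cmxM a b c d : cmx a b *m cmx c d = cmx (a * c - b * d) (a * d + b * c).
Proof.
apply/matrixP=> i j; rewrite !mxE !big_ord_recl big_ord0 !mxE.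
by case: i => [[|[|//]] ?]; case: j => [[|[|//]] ?] /=; ring.
Qed.

Lemma cmx_scalar a : cmx a 0 = a%:M.
Proof.
apply/matrixP=> i j; rewrite !mxE.
by case: i => [[|[|//]] ?]; case: j => [[|[|//]] ?] /=; rewrite ?oppr0.
Qed.

Lemma cmx1 : cmx 1 0 = 1.
Proof. exact: cmx_scalar. Qed.

Lemma cmxB a b c d : cmx a b - cmx c d = cmx (a - c) (b - d).
Proof.
apply/matrixP=> i j; rewrite !mxE.
by case: i => [[|[|//]] ?]; case: j => [[|[|//]] ?] /=; ring.
Qed.

Lemma cmx_norm a b : cmx a (- b) *m cmx a b = (a ^+ 2 + b ^+ 2)%:M.
Proof. by rewrite cmxM -cmx_scalar; congr cmx; ring. Qed.

Lemma cmx_expr a b n : exists c d, cmx a b ^+ n = cmx c d.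
Proof.
elim: n => [|n [c [d IHn]]]; first by exists 1, 0; rewrite cmx1.
by rewrite exprSr IHn -mulmxE cmxM; eexists; eexists.
Qed.

Definition isotropic_vec (y : R) : 'cV[R]_2 :=
  \col_i if i == ord0 then 1 else y.

Lemma cmx_isotropic a b y : y ^+ 2 = -1 ->
  cmx a b *m isotropic_vec y = (a - b * y) *: isotropic_vec y.
Proof.
move=> y2; apply/matrixP=> i j; rewrite !mxE !big_ord_recl big_ord0 !mxE.
case: i => [[|[|//]] ?] /=; first by ring.
have -> : b * 1 = - b * (y ^+ 2) by rewrite y2; ring.
ring.
Qed.

Lemma scale_isotropic_eq c y : c *: isotropic_vec y = isotropic_vec y -> c = 1.
Proof. by move/(congr1 (fun w : 'cV[R]_2 => w ord0 0)); rewrite !mxE /= mulr1. Qed.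

End ComplexMatrix.

Arguments cmx {R}.
Arguments isotropic_vec {R}.

Lemma mulmx_expr_eigen (R : comRingType) n (A : 'M[R]_n.+1) (v : 'cV_n.+1) c j :
  A *m v = c *: v -> A ^+ j *m v = c ^+ j *: v.
Proof.
move=> Av; elim: j => [|j IHj]; first by rewrite !expr0 mul1mx scale1r.
by rewrite exprSr -mulmxE -mulmxA Av -scalemxAr IHj scalerA -exprS.
Qed.

Section ComplexMatrixField.
Variable F : fieldType.

Lemma cmx_fix_eq0 (a b : F) (v : 'cV_2) :
  (a - 1) ^+ 2 + b ^+ 2 != 0 -> cmx a b *m v = v -> v = 0.
Proof.
move=> norm_neq0 fix_v.
have: cmx (a - 1) (- b) *m ((cmx a b - 1) *m v) = 0.
  by rewrite mulmxBl mul1mx fix_v subrr mulmx0.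
rewrite -cmx1 cmxB subr0 mulmxA cmx_norm mul_scalar_mx => /eqP.
by rewrite scalemx_eq0 (negbTE norm_neq0) => /eqP.
Qed.

Lemma sqr_add_eq0 (x y : F) : (forall z : F, z ^+ 2 != -1) ->
  x ^+ 2 + y ^+ 2 = 0 -> x = 0 /\ y = 0.
Proof.
move=> no_sqrt sum0; have [y0 | y_neq0] := eqVneq y 0.
  by move: sum0; rewrite y0 expr0n addr0 => /eqP; rewrite sqrf_eq0 => /eqP.
have x2 : x ^+ 2 = - y ^+ 2 by apply/eqP; rewrite -addr_eq0 sum0.
by have := no_sqrt (x / y); rewrite expr_div_n x2 mulNr divff ?expf_neq0 ?eqxx.
Qed.

Lemma cmx_fix_eq1 (a b : F) (v : 'cV_2) : (forall z : F, z ^+ 2 != -1) ->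
  v != 0 -> cmx a b *m v = v -> cmx a b = 1.
Proof.
move=> no_sqrt v_neq0 fix_v.
have norm0 : (a - 1) ^+ 2 + b ^+ 2 = 0.
  by apply/eqP; apply: contraNT v_neq0 => /cmx_fix_eq0/(_ fix_v) ->.
have [/eqP a1 ->] := sqr_add_eq0 _ _ no_sqrt norm0.
by rewrite subr_eq0 in a1; rewrite (eqP a1) cmx1.
Qed.

End ComplexMatrixField.

Lemma sqrtN1_expr_conj (R : comRingType) (y : R) m : y ^+ 2 = -1 -> odd m ->
  (1 + y) ^+ (2 * m) = - (1 - y) ^+ (2 * m).
Proof.
move=> y2 m_odd; have conj2 : (1 + y) ^+ 2 = - (1 - y) ^+ 2.
  have: (1 + y) ^+ 2 + (1 - y) ^+ 2 = 2%:R * (y ^+ 2 + 1) by ring.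
  by rewrite y2 addNr mulr0 => /eqP; rewrite addr_eq0 => /eqP.
by rewrite !exprM conj2 exprNn -signr_odd m_odd mulN1r.
Qed.

Section OddPrime.
Variable p : nat.
Hypotheses (p_pr : prime p) (p_odd : odd p).

Lemma Fp_opp1_neq1 : (-1 : 'F_p) != 1.
Proof.
rewrite eq_sym -subr_eq0 opprK -[1 + 1]/(2%:R) -unitfE.
by rewrite (unitFpE p_pr) coprimen2.
Qed.

Lemma Fp_fermat (z : 'F_p) : z != 0 -> z ^+ p.-1 = 1.
Proof.
move=> z_neq0; apply: (mulfI z_neq0); rewrite mulr1 -exprS prednK ?prime_gt0 //.
by have := expf_card z; rewrite card_Fp.
Qed.

Lemma Fp_sqr_neqN1 : (p %% 4 = 3)%N -> forall y : 'F_p, y ^+ 2 != -1.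
Proof.
move=> p3 y; apply/eqP=> y2.
have y_neq0 : y != 0.
  by apply: contra_eq_neq y2 => ->; rewrite expr0n eq_sym oppr_eq0 oner_neq0.
have := Fp_fermat _ y_neq0; have -> : p.-1 = (2 * (p %/ 2))%N by lia.
rewrite exprM y2 -signr_odd (_ : odd (p %/ 2)); last by apply/negPn; rewrite -eqb0; lia.
by move/eqP; rewrite expr1 (negbTE Fp_opp1_neq1).
Qed.

Lemma Fp_sqrtN1 : (p %% 4 = 1)%N -> exists y : 'F_p, y ^+ 2 = -1.
Proof.
move=> p1; have p_gt1 := prime_gt1 p_pr.
have: has (p.-1).-primitive_root (enum (predC1 (0 : 'F_p))).
  apply: has_prim_root; rewrite ?enum_uniq -?cardE ?cardC1 ?card_Fp //; first lia.
  by apply/allP=> z; rewrite mem_enum unity_rootE => /Fp_fermat ->.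
case/hasP=> g _ g_prim; exists (g ^+ (p %/ 4)).
have: (g ^+ (p %/ 4)) ^+ 2 ^+ 2 = 1.
  by rewrite -!exprM (_ : _ * (2 * 2) = p.-1)%N ?prim_expr_order //; lia.
move/eqP; rewrite sqrf_eq1 -exprM -(prim_order_dvd g_prim) => /orP[|/eqP //].
by move/dvdn_leq; lia.
Qed.

(* Here p %/ 2 = (p - 1) / 2, as p is odd. *)
Lemma Fp_eigenvalues_5mod8 : (p %% 8 = 5)%N -> exists y : 'F_p,
  [/\ y ^+ 2 = -1, (1 - y) ^+ (p %/ 2) = 1 & (1 + y) ^+ (p %/ 2) = -1].
Proof.
move=> p5; have [y y2] : exists y : 'F_p, y ^+ 2 = -1 by apply: Fp_sqrtN1; lia.
have conj (z : 'F_p) : z ^+ 2 = -1 -> (1 + z) ^+ (p %/ 2) = - (1 - z) ^+ (p %/ 2).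
  move=> z2; rewrite (_ : p %/ 2 = 2 * (p %/ 4))%N; last lia.
  by apply: sqrtN1_expr_conj; rewrite // (_ : p %/ 4 = (p %/ 8).*2.+1)%N ?oddS ?odd_double //; lia.
have lam_neq0 : 1 - y != 0.
  by rewrite subr_eq0; apply: contra_eq_neq y2 => <-; rewrite expr1n eq_sym Fp_opp1_neq1.
have: ((1 - y) ^+ (p %/ 2)) ^+ 2 = 1.
  by rewrite -exprM (_ : _ * 2 = p.-1)%N ?Fp_fermat //; lia.
move/eqP; rewrite sqrf_eq1 => /orP[/eqP lam1 | /eqP lamN1].
  by exists y; rewrite conj // lam1.
have mu1 : (1 + y) ^+ (p %/ 2) = 1 by rewrite conj // lamN1 opprK.
by exists (- y); rewrite sqrrN opprK mu1.
Qed.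

Lemma subadd_cmx : subadd p = cmx 1 1.
Proof.
apply/matrixP=> i j; rewrite !mxE.
by case: i => [[|[|//]] ?]; case: j => [[|[|//]] ?].
Qed.

Lemma iter_step j v : iter j (step p) v = subadd p ^+ j *m v.
Proof.
elim: j => [|j IHj]; first by rewrite mul1mx.
by rewrite iterS IHj /step mulmxA exprS.
Qed.

Lemma step_inj : injective (step p).
Proof.
move=> v w; rewrite /step => /(congr1 (mulmx (cmx 1 (- 1)))).
rewrite !mulmxA subadd_cmx cmx_norm !mul_scalar_mx expr1n.
by apply: scalerI; rewrite addr_eq0 eq_sym Fp_opp1_neq1.
Qed.

Lemma subadd_expr_isotropic y j : y ^+ 2 = -1 ->
  subadd p ^+ j *m isotropic_vec y = (1 - y) ^+ j *: isotropic_vec y.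
Proof.
by move=> y2; apply: mulmx_expr_eigen; rewrite subadd_cmx cmx_isotropic // mul1r.
Qed.

Lemma subadd_fix_3mod4 n (v : 'cV['F_p]_2) : (p %% 4 = 3)%N ->
  v != 0 -> subadd p ^+ n *m v = v -> subadd p ^+ n = 1.
Proof.
move=> p3; have [a [b ->]] : exists a b, subadd p ^+ n = cmx a b.
  by rewrite subadd_cmx; apply: cmx_expr.
by apply: cmx_fix_eq1; apply: Fp_sqr_neqN1.
Qed.

Lemma no_secondary_cycle_3mod4 k c : is_Zp_order p k -> (p %% 4 = 3)%N ->
  ~ secondary_cycle p k c.
Proof.
move=> [k_gt0 [Mk Mk_min]] p3 [[c_neq0 [c_uniq c_cycle]] [not_primary size_neq1]].
apply: not_primary; split=> //.
have [x x_in_c] : exists x, x \in c.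
  by case: (c) c_neq0 => // x s _; exists x; apply: mem_head.
rewrite -(order_cycle c_cycle c_uniq x_in_c) in size_neq1 *.
have x_fix := iter_order_cycle c_cycle x_in_c x_in_c.
have x_neq0 : x != 0.
  apply/eqP=> x0; apply: size_neq1; apply/eqP; rewrite eqn_leq order_gt0 andbT x0.
  by apply: order_le_period; rewrite //= /step mulmx0.
have M_order : subadd p ^+ order (step p) x = 1.
  by apply: subadd_fix_3mod4 x_neq0 _ => //; rewrite -iter_step.
apply/eqP; rewrite eqn_leq order_le_period ?iter_step ?Mk ?mul1mx //=.
by rewrite leqNgt; apply/negP=> lt_k; exact: Mk_min _ (order_gt0 _ _) lt_k M_order.
Qed.

Lemma secondary_cycle_5mod8 k : is_Zp_order p k -> (p %% 8 = 5)%N ->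
  exists c, secondary_cycle p k c.
Proof.
move=> [_ [Mk _]] p5.
have [y [y2 lam_h mu_h]] := Fp_eigenvalues_5mod8 p5.
set v := isotropic_vec y; set n := order (step p) v.
have lam_n : (1 - y) ^+ n = 1.
  apply: (@scale_isotropic_eq _ _ y).
  by rewrite -subadd_expr_isotropic // -iter_step iter_order //; apply: step_inj.
have n_dvd : (n %| p %/ 2)%N.
  apply: order_dvdn_period; first exact: step_inj.
  by rewrite iter_step subadd_expr_isotropic // lam_h scale1r.
exists (orbit (step p) v); rewrite /secondary_cycle /primary_cycle /directed_cycle.
rewrite size_orbit -/n; split; [split; [|split] | split].
- by rewrite /orbit -orderSpred.
- exact: orbit_uniq.
- exact/cycle_orbit/step_inj.
- case=> _ nk; have mu_n : (1 + y) ^+ n = 1.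
    have := subadd_expr_isotropic (- y) n; rewrite sqrrN opprK nk Mk mul1mx.
    by move=> /(_ y2)/esym/scale_isotropic_eq.
  move: mu_h; rewrite -(divnK n_dvd) mulnC exprM mu_n expr1n => /eqP.
  by rewrite eq_sym (negbTE Fp_opp1_neq1).
- move=> n1; move: lam_n; rewrite n1 expr1 -[RHS]subr0 => /addrI/oppr_inj y0.
  by move: y2; rewrite y0 expr0n => /eqP; rewrite eq_sym oppr_eq0 oner_eq0.
Qed.

End OddPrime.

Theorem theorem7p4 (p k : nat) :
  prime p -> odd p -> is_Zp_order p k ->
  ((p %% 8 = 3 \/ p %% 8 = 7)%N ->
     forall c : seq 'cV['F_p]_2, ~ secondary_cycle p k c) /\
  (p %% 8 = 5 ->
     exists c : seq 'cV['F_p]_2, secondary_cycle p k c)%N.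
Proof.
move=> p_pr p_odd Mk; split.
  by move=> p37 c; apply: no_secondary_cycle_3mod4 => //; lia.
exact: secondary_cycle_5mod8.
Qed.
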